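(* Let $A$ be a separable unital C*-algebra with many asymptotically central elements, and let $\mathcal U$ be a nonprincipal ultrafilter on $\mathbb N$. Then $A'\cap A^{\mathcal U}$ and $A^{\mathcal U}$ both have density character $\mathfrak c$ and cardinality $\mathfrak c$.
   Context: A C*-algebra $A$ has many asymptotically central elements if there is $\delta>0$ such that for every $n\in\mathbb N$, every finite $F\subset A$ and every $\varepsilon>0$ there are $a_1,\dots,a_n\in A$ of norm at most $1$ with $\|a_i-a_j\|\ge\delta$ for $1\le i<j\le n$ and $\|a_ib-ba_i\|\le\varepsilon$ for all $i$ and $b\in F$. $A^{\mathcal U}$ is the C*-ultrapower, $A\subset A^{\mathcal U}$ diagonally, $A'\cap A^{\mathcal U}$ the relative commutant. Density character is the least cardinality of a dense subset; $\mathfrak c$ is the cardinality of $\mathbb R$. *)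

From Stdlib Require Import Reals Lra.
Open Scope R_scope.

Record Cpx : Type := mkCpx { Cre : R; Cim : R }.
Definition Cadd (z w : Cpx) : Cpx := mkCpx (Cre z + Cre w) (Cim z + Cim w).
Definition Cmul (z w : Cpx) : Cpx :=
  mkCpx (Cre z * Cre w - Cim z * Cim w) (Cre z * Cim w + Cim z * Cre w).
Definition Cconj (z : Cpx) : Cpx := mkCpx (Cre z) (- Cim z).
Definition Cabs (z : Cpx) : R := sqrt (Cre z * Cre z + Cim z * Cim z).
Definition C1 : Cpx := mkCpx 1 0.

Record CStarAlg : Type := {
  car :> Type;
  a0 : car;
  a1 : car;
  aadd : car -> car -> car;
  aopp : car -> car;
  amul : car -> car -> car;
  ascal : Cpx -> car -> car;
  astar : car -> car;
  anorm : car -> R;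
  aaddA : forall x y z, aadd x (aadd y z) = aadd (aadd x y) z;
  aaddC : forall x y, aadd x y = aadd y x;
  aadd0 : forall x, aadd x a0 = x;
  aaddN : forall x, aadd x (aopp x) = a0;
  ascal1 : forall x, ascal C1 x = x;
  ascalA : forall c d x, ascal c (ascal d x) = ascal (Cmul c d) x;
  ascalDr : forall c x y, ascal c (aadd x y) = aadd (ascal c x) (ascal c y);
  ascalDl : forall c d x, ascal (Cadd c d) x = aadd (ascal c x) (ascal d x);
  amulA : forall x y z, amul x (amul y z) = amul (amul x y) z;
  amulDl : forall x y z, amul (aadd x y) z = aadd (amul x z) (amul y z);
  amulDr : forall x y z, amul x (aadd y z) = aadd (amul x y) (amul x z);
  amul_scall : forall c x y, amul (ascal c x) y = ascal c (amul x y);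
  amul_scalr : forall c x y, amul x (ascal c y) = ascal c (amul x y);
  amul1l : forall x, amul a1 x = x;
  amul1r : forall x, amul x a1 = x;
  astarK : forall x, astar (astar x) = x;
  astarD : forall x y, astar (aadd x y) = aadd (astar x) (astar y);
  astar_scal : forall c x, astar (ascal c x) = ascal (Cconj c) (astar x);
  astarM : forall x y, astar (amul x y) = amul (astar y) (astar x);
  anorm_ge0 : forall x, 0 <= anorm x;
  anorm_eq0 : forall x, anorm x = 0 -> x = a0;
  anorm_triangle : forall x y, anorm (aadd x y) <= anorm x + anorm y;
  anorm_scal : forall c x, anorm (ascal c x) = Cabs c * anorm x;
  anorm_subm : forall x y, anorm (amul x y) <= anorm x * anorm y;
  anorm_cstar : forall x, anorm (amul (astar x) x) = anorm x * anorm x;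
  acomplete : forall u : nat -> car,
    (forall eps, eps > 0 -> exists N, forall m n, (N <= m)%nat -> (N <= n)%nat ->
        anorm (aadd (u m) (aopp (u n))) < eps) ->
    exists l, forall eps, eps > 0 -> exists N, forall n, (N <= n)%nat ->
        anorm (aadd (u n) (aopp l)) < eps
}.

Arguments a0 {c0}. Arguments a1 {c0}. Arguments aadd {c0}. Arguments aopp {c0}.
Arguments amul {c0}. Arguments ascal {c0}. Arguments astar {c0}. Arguments anorm {c0}.

Definition adist {A : CStarAlg} (x y : A) : R := anorm (aadd x (aopp y)).
Definition acomm {A : CStarAlg} (x y : A) : A := aadd (amul x y) (aopp (amul y x)).

Definition separable (A : CStarAlg) : Prop :=
  exists d : nat -> A, forall (x : A) (eps : R), eps > 0 ->
    exists k, adist x (d k) < eps.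

(** many asymptotically central elements (the a_1..a_n are indexed by i < n) *)
Definition many_asymp_central (A : CStarAlg) : Prop :=
  exists delta : R, delta > 0 /\
    forall (n : nat) (F : list A) (eps : R), eps > 0 ->
      exists a : nat -> A,
        (forall i, (i < n)%nat -> anorm (a i) <= 1) /\
        (forall i j, (i < j)%nat -> (j < n)%nat -> adist (a i) (a j) >= delta) /\
        (forall i b, (i < n)%nat -> List.In b F -> anorm (acomm (a i) b) <= eps).

Definition is_ultrafilter (U : (nat -> Prop) -> Prop) : Prop :=
  U (fun _ => True) /\
  ~ U (fun _ => False) /\
  (forall P Q : nat -> Prop, U P -> (forall n, P n -> Q n) -> U Q) /\
  (forall P Q : nat -> Prop, U P -> U Q -> U (fun n => P n /\ Q n)) /\
  (forall P : nat -> Prop, U P \/ U (fun n => ~ P n)).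

Definition nonprincipal (U : (nat -> Prop) -> Prop) : Prop :=
  forall k : nat, ~ U (fun n => n = k).

Definition ulim (U : (nat -> Prop) -> Prop) (f : nat -> R) (L : R) : Prop :=
  forall eps, eps > 0 -> U (fun n => Rabs (f n - L) < eps).

(** * The C*-ultrapower A^U: bounded sequences modulo U-null sequences.
    An element is an equivalence class, represented as a predicate on
    sequences. *)
Definition bdd_seq {A : CStarAlg} (x : nat -> A) : Prop :=
  exists M, forall n, anorm (x n) <= M.

Definition uequiv {A : CStarAlg} (U : (nat -> Prop) -> Prop) (x y : nat -> A) : Prop :=
  ulim U (fun n => adist (x n) (y n)) 0.

Definition UPow (A : CStarAlg) (U : (nat -> Prop) -> Prop) : Type :=
  { P : (nat -> A) -> Prop |
      exists x, bdd_seq x /\ forall y, P y <-> (bdd_seq y /\ uequiv U x y) }.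

Definition urep {A U} (p : UPow A U) (x : nat -> A) : Prop := proj1_sig p x.

Definition udist {A U} (p q : UPow A U) (r : R) : Prop :=
  exists x y, urep p x /\ urep q y /\ ulim U (fun n => adist (x n) (y n)) r.

(** relative commutant A' ∩ A^U (A embedded diagonally) *)
Definition relcomm {A U} (p : UPow A U) : Prop :=
  forall (b : A) (x : nat -> A), urep p x ->
    ulim U (fun n => anorm (acomm (x n) b)) 0.

Definition card_eq_c {X : Type} (S : X -> Prop) : Prop :=
  exists f : R -> {x | S x},
    (forall r s, f r = f s -> r = s) /\ (forall y, exists r, f r = y).

Definition card_ge_c {X : Type} (S : X -> Prop) : Prop :=
  exists f : R -> {x | S x}, forall r s, f r = f s -> r = s.

Definition dense_in {X : Type} (d : X -> X -> R -> Prop) (S D : X -> Prop) : Prop :=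
  (forall x, D x -> S x) /\
  (forall x, S x -> forall eps, eps > 0 -> exists y r, D y /\ d x y r /\ r < eps).

Definition density_char_c {X : Type} (d : X -> X -> R -> Prop) (S : X -> Prop) : Prop :=
  (exists D, dense_in d S D /\ card_eq_c D) /\
  (forall D, dense_in d S D -> card_ge_c D).

From Stdlib Require Import Reals Lra Lia ZArith List Classical ClassicalEpsilon
  FunctionalExtensionality PropExtensionality ProofIrrelevance FinFun.
From Stdlib Require Cantor.
Open Scope R_scope.

(* Fix a dense sequence (d_k) in A. Many asymptotically central elements give, for every m,
   2^m elements of the unit ball, pairwise delta-apart and commuting with d_0, ..., d_m up to
   1/(m+1). A binary sequence s picks at stage m the element indexed by its first m bits;
   distinct sequences eventually pick delta-apart elements, so their classes form a
   delta-separated family of size c inside A' ∩ A^U. A dense subset must have distinct points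
   delta/2-close to distinct members of this family, hence has size at least c. Conversely
   A^U injects into A^N, which injects into 2^N by recording which balls B(d_k, 1/(m+1))
   contain each term, and Schroeder-Bernstein gives cardinality exactly c; each of the two sets
   is then a dense subset of itself of cardinality c. *)

Section SchroederBernstein.
Variables (X Y : Type) (f : X -> Y) (g : Y -> X).
Hypotheses (f_inj : Injective f) (g_inj : Injective g).

(* The g o f-orbits of the points outside the range of g; [sb_map] is f on them and g^-1
   elsewhere. *)
Fixpoint chain (n : nat) (x : X) : Prop :=
  match n with
  | O => ~ exists y, g y = x
  | S n => exists x', chain n x' /\ g (f x') = x
  end.

Definition in_chain (x : X) : Prop := exists n, chain n x.

Lemma in_range_g_of_not_in_chain x : ~ in_chain x -> exists y, g y = x.
Proof. intros H. apply NNPP. intro Hx. apply H. exists O. exact Hx. Qed.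

Definition sb_map (x : X) : Y :=
  match excluded_middle_informative (in_chain x) with
  | left _ => f x
  | right H => proj1_sig (constructive_indefinite_description _ (in_range_g_of_not_in_chain x H))
  end.

Lemma sb_map_inj : Injective sb_map.
Proof.
  intros a b. unfold sb_map.
  destruct (excluded_middle_informative (in_chain a)) as [Ha|Ha];
  destruct (excluded_middle_informative (in_chain b)) as [Hb|Hb];
  try destruct (constructive_indefinite_description _ (in_range_g_of_not_in_chain a Ha))
    as [ya Hya];
  try destruct (constructive_indefinite_description _ (in_range_g_of_not_in_chain b Hb))
    as [yb Hyb];
  simpl; intro E.
  - now apply f_inj.
  - exfalso. apply Hb. destruct Ha as [n Hn]. exists (S n). exists a. now rewrite E.
  - exfalso. apply Ha. destruct Hb as [n Hn]. exists (S n). exists b. now rewrite <- E.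
  - congruence.
Qed.

Lemma sb_map_surj y : exists x, sb_map x = y.
Proof.
  destruct (classic (in_chain (g y))) as [[[|n] Hn]|H].
  - exfalso. apply Hn. now exists y.
  - destruct Hn as [x [Hx E]]. exists x. unfold sb_map.
    destruct (excluded_middle_informative (in_chain x)) as [_|N].
    + now apply g_inj.
    + exfalso. apply N. now exists n.
  - exists (g y). unfold sb_map.
    destruct (excluded_middle_informative (in_chain (g y))) as [N|N]; [contradiction|].
    destruct (constructive_indefinite_description _ _) as [z Hz]. now apply g_inj.
Qed.

Theorem schroeder_bernstein :
  exists h : X -> Y, Injective h /\ forall y, exists x, h x = y.
Proof. exists sb_map. split; [apply sb_map_inj | apply sb_map_surj]. Qed.

End SchroederBernstein.

Lemma IZR_nat_diff (z : Z) : IZR z = INR (Z.to_nat z) - INR (Z.to_nat (- z)).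
Proof.
  rewrite !INR_IZR_INZ. destruct (Z_le_gt_dec 0 z).
  - rewrite Z2Nat.id by lia. replace (Z.to_nat (- z)) with O by lia. simpl. lra.
  - replace (Z.to_nat z) with O by lia. rewrite Z2Nat.id by lia.
    rewrite opp_IZR. simpl. lra.
Qed.

Definition rat_enum (n : nat) : R :=
  let (a, m) := Cantor.of_nat n in
  let (c, e) := Cantor.of_nat m in (INR a - INR c) / INR (S e).

Lemma rat_enum_between r s : r < s -> exists n, r < rat_enum n < s.
Proof.
  intros Hrs.
  destruct (archimed_cor1 (s - r)) as [N [HN HN0]]; [lra|].
  assert (HNpos : 0 < INR N) by (apply lt_0_INR; lia).
  assert (Hgap : (s - r) * INR N > 1).
  { apply Rmult_lt_compat_r with (r := INR N) in HN; auto.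
    rewrite Rinv_l in HN; lra. }
  set (z := up (r * INR N)).
  destruct (archimed (r * INR N)) as [Hz1 Hz2]. fold z in Hz1, Hz2.
  exists (Cantor.to_nat (Z.to_nat z, Cantor.to_nat (Z.to_nat (- z), pred N))).
  unfold rat_enum. rewrite !Cantor.cancel_of_to, <- IZR_nat_diff, Nat.succ_pred_pos by lia.
  split; apply Rmult_lt_reg_r with (INR N); auto;
    unfold Rdiv; rewrite Rmult_assoc, Rinv_l by lra; nra.
Qed.

(* The Dedekind cut of r in the enumeration of the rationals. *)
Definition cut_bits (r : R) (n : nat) : bool :=
  if Rlt_dec (rat_enum n) r then true else false.

Lemma cut_bits_inj : Injective cut_bits.
Proof.
  assert (Hlt : forall r s, r < s -> cut_bits r <> cut_bits s).
  { intros r s Hrs E. destruct (rat_enum_between r s Hrs) as [n Hn].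
    apply (f_equal (fun b => b n)) in E. unfold cut_bits in E.
    destruct (Rlt_dec (rat_enum n) r), (Rlt_dec (rat_enum n) s); try discriminate; lra. }
  intros r s E. destruct (Rtotal_order r s) as [H|[H|H]]; auto.
  - now destruct (Hlt r s H).
  - now destruct (Hlt s r H).
Qed.

Lemma first_difference {T : Type} (b c : nat -> T) :
  b <> c -> exists k, b k <> c k /\ forall n, (n < k)%nat -> b n = c n.
Proof.
  intros Hbc.
  destruct (not_all_ex_not _ _ (fun H => Hbc (functional_extensionality b c H))) as [k Hk].
  induction k as [k IH] using (well_founded_induction lt_wf).
  destruct (classic (forall n, (n < k)%nat -> b n = c n)) as [Hk'|Hk'].
  - now exists k.
  - apply not_all_ex_not in Hk' as [n Hn]. apply imply_to_and in Hn as [Hn Hbn].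
    exact (IH n Hn Hbn).
Qed.

Definition ternary_digit (b : nat -> bool) (n : nat) : R := if b n then / 3 ^ n else 0.

Fixpoint ternary_sum (b : nat -> bool) (N : nat) : R :=
  match N with O => 0 | S N => ternary_sum b N + ternary_digit b N end.

Lemma inv_pow3_pos n : 0 < / 3 ^ n.
Proof. apply Rinv_0_lt_compat, pow_lt. lra. Qed.

Lemma inv_pow3_S n : / 3 ^ S n = / 3 ^ n / 3.
Proof. simpl. rewrite Rinv_mult. unfold Rdiv. ring. Qed.

Lemma ternary_digit_bounds b n : 0 <= ternary_digit b n <= / 3 ^ n.
Proof. pose proof (inv_pow3_pos n). unfold ternary_digit. destruct (b n); lra. Qed.

Lemma ternary_sum_bound b N : ternary_sum b N <= 3 / 2 - 3 / 2 * / 3 ^ N.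
Proof.
  induction N as [|N IH]; simpl.
  - lra.
  - pose proof (ternary_digit_bounds b N). rewrite Rinv_mult. lra.
Qed.

Lemma ternary_sum_cv b : { l | Un_cv (ternary_sum b) l }.
Proof.
  apply growing_cv.
  - intro n. simpl. pose proof (ternary_digit_bounds b n). lra.
  - exists (3 / 2). intros x [N ->].
    pose proof (ternary_sum_bound b N). pose proof (inv_pow3_pos N). lra.
Qed.

Definition ternary (b : nat -> bool) : R := proj1_sig (ternary_sum_cv b).

(* Digits after the first difference sum to at most half of the digit at the difference. *)
Lemma ternary_sum_gap b c k :
  (forall n, (n < k)%nat -> b n = c n) -> b k = true -> c k = false ->
  forall j, ternary_sum b (S k + j) - ternary_sum c (S k + j) >= / 3 ^ k / 2 + / 3 ^ (k + j) / 2.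
Proof.
  intros Hbc Hb Hc j. induction j as [|j IH].
  - assert (Hagree : ternary_sum b k = ternary_sum c k).
    { clear Hb Hc. induction k as [|k IHk]; simpl; auto.
      rewrite IHk by auto. unfold ternary_digit. now rewrite Hbc by lia. }
    rewrite !Nat.add_0_r. simpl. rewrite Hagree. unfold ternary_digit. rewrite Hb, Hc. lra.
  - replace (S k + S j)%nat with (S (S k + j)) by lia. simpl ternary_sum.
    replace (k + S j)%nat with (S (k + j)) by lia.
    pose proof (ternary_digit_bounds b (S k + j)). pose proof (ternary_digit_bounds c (S k + j)).
    replace (S k + j)%nat with (S (k + j)) in * by lia. rewrite inv_pow3_S in *.
    pose proof (inv_pow3_pos (k + j)). simpl in IH. lra.
Qed.

Lemma Un_cv_ge_eventually (u : nat -> R) l a N :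
  Un_cv u l -> (forall n, (n >= N)%nat -> u n >= a) -> l >= a.
Proof.
  intros Hu Ha. apply Rnot_lt_ge. intro Hl.
  destruct (Hu (a - l)) as [M HM]; [lra|].
  specialize (HM (max M N) ltac:(lia)). specialize (Ha (max M N) ltac:(lia)).
  unfold Rdist in HM. apply Rabs_def2 in HM. lra.
Qed.

Lemma ternary_gap b c k :
  (forall n, (n < k)%nat -> b n = c n) -> b k = true -> c k = false ->
  ternary b - ternary c >= / 3 ^ k / 2.
Proof.
  intros Hbc Hb Hc. unfold ternary.
  destruct (ternary_sum_cv b) as [lb Hlb], (ternary_sum_cv c) as [lc Hlc]. simpl.
  apply (Un_cv_ge_eventually (fun n => ternary_sum b n - ternary_sum c n) _ _ (S k)).
  - now apply CV_minus.
  - intros n Hn. replace n with (S k + (n - S k))%nat by lia.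
    pose proof (ternary_sum_gap b c k Hbc Hb Hc (n - S k)).
    pose proof (inv_pow3_pos (k + (n - S k))). lra.
Qed.

Lemma ternary_inj : Injective ternary.
Proof.
  intros b c E. apply NNPP. intro Hbc.
  destruct (first_difference b c Hbc) as [k [Hk Hlt]].
  pose proof (inv_pow3_pos k).
  destruct (b k) eqn:Eb, (c k) eqn:Ec; try congruence.
  - pose proof (ternary_gap b c k Hlt Eb Ec). lra.
  - assert (Hlt' : forall n, (n < k)%nat -> c n = b n) by (intros; symmetry; auto).
    pose proof (ternary_gap c b k Hlt' Ec Eb). lra.
Qed.

Lemma card_ge_c_of_cantor {X : Type} (S : X -> Prop) (f : (nat -> bool) -> {x | S x}) :
  Injective f -> card_ge_c S.
Proof. intros Hf. exists (fun r => f (cut_bits r)). intros r s E. now apply cut_bits_inj, Hf. Qed.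

Lemma card_eq_c_of_cantor {X : Type} (S : X -> Prop)
    (f : (nat -> bool) -> {x | S x}) (g : {x | S x} -> nat -> bool) :
  Injective f -> Injective g -> card_eq_c S.
Proof.
  intros Hf Hg.
  apply (schroeder_bernstein R {x | S x} (fun r => f (cut_bits r)) (fun p => ternary (g p))).
  - intros r s E. now apply cut_bits_inj, Hf.
  - intros p q E. now apply Hg, ternary_inj.
Qed.

Section NormFacts.
Variable A : CStarAlg.
Implicit Types x y z u v b c : A.

Lemma aadd0l x : aadd a0 x = x.
Proof. rewrite aaddC. apply aadd0. Qed.

Lemma aaddNl x : aadd (aopp x) x = a0.
Proof. rewrite aaddC. apply aaddN. Qed.

Lemma aadd_cancel_l u x y : aadd u x = aadd u y -> x = y.
Proof.
  intros E. rewrite <- (aadd0l x), <- (aadd0l y), <- (aaddNl u), <- !aaddA, E.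
  reflexivity.
Qed.

Lemma aopp_unique x y : aadd x y = a0 -> y = aopp x.
Proof. intros E. apply (aadd_cancel_l x). now rewrite E, aaddN. Qed.

Lemma aoppK x : aopp (aopp x) = x.
Proof. symmetry. apply aopp_unique, aaddNl. Qed.

Lemma aoppD x y : aopp (aadd x y) = aadd (aopp x) (aopp y).
Proof.
  symmetry. apply aopp_unique.
  rewrite (aaddC _ (aopp x)), aaddA, <- (aaddA _ x y), aaddN, aadd0, aaddN.
  reflexivity.
Qed.

Lemma amul0r x : amul x a0 = a0.
Proof. apply (aadd_cancel_l (amul x a0)). now rewrite <- amulDr, !aadd0. Qed.

Lemma amul0l x : amul a0 x = a0.
Proof. apply (aadd_cancel_l (amul a0 x)). now rewrite <- amulDl, !aadd0. Qed.

Lemma amulNr x y : amul x (aopp y) = aopp (amul x y).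
Proof. apply aopp_unique. rewrite <- amulDr, aaddN. apply amul0r. Qed.

Lemma amulNl x y : amul (aopp x) y = aopp (amul x y).
Proof. apply aopp_unique. rewrite <- amulDl, aaddN. apply amul0l. Qed.

Lemma ascal0 x : ascal (mkCpx 0 0) x = a0.
Proof.
  apply (aadd_cancel_l (ascal (mkCpx 0 0) x)). rewrite <- ascalDl, aadd0.
  unfold Cadd. simpl. now rewrite Rplus_0_l.
Qed.

Lemma aopp_scal x : aopp x = ascal (mkCpx (-1) 0) x.
Proof.
  symmetry. apply aopp_unique. rewrite <- (ascal1 A x) at 1. rewrite <- ascalDl.
  unfold Cadd, C1. simpl. rewrite Rplus_opp_r, Rplus_0_l. apply ascal0.
Qed.

Lemma anorm0 : anorm (a0 : A) = 0.
Proof.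
  rewrite <- (ascal0 a0), anorm_scal. unfold Cabs. simpl.
  rewrite Rmult_0_l, Rplus_0_l, sqrt_0. ring.
Qed.

Lemma anorm_opp x : anorm (aopp x) = anorm x.
Proof.
  rewrite aopp_scal, anorm_scal. unfold Cabs. simpl.
  replace (-1 * -1 + 0 * 0) with 1 by ring. rewrite sqrt_1. ring.
Qed.

Lemma adist_ge0 x y : 0 <= adist x y.
Proof. apply anorm_ge0. Qed.

Lemma adist_xx x : adist x x = 0.
Proof. unfold adist. rewrite aaddN. apply anorm0. Qed.

Lemma adist_eq0 x y : adist x y = 0 -> x = y.
Proof.
  unfold adist. intros H. apply anorm_eq0 in H.
  rewrite <- (aadd0 _ y), <- H, aaddC, <- aaddA, aaddNl, aadd0. reflexivity.
Qed.

Lemma adist_sym x y : adist x y = adist y x.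
Proof. unfold adist. now rewrite <- anorm_opp, aoppD, aoppK, aaddC. Qed.

Lemma adist_triangle x y z : adist x z <= adist x y + adist y z.
Proof.
  unfold adist. replace (aadd x (aopp z)) with (aadd (aadd x (aopp y)) (aadd y (aopp z))).
  - apply anorm_triangle.
  - now rewrite aaddA, <- (aaddA _ x), aaddNl, aadd0.
Qed.

Lemma anorm_le_adist x y : anorm x <= anorm y + adist x y.
Proof.
  unfold adist. replace x with (aadd y (aadd x (aopp y))) at 1.
  - apply anorm_triangle.
  - now rewrite (aaddC _ x), aaddA, aaddN, aadd0l.
Qed.

Lemma adist_aadd_opp u v u' v' :
  adist (aadd u (aopp v)) (aadd u' (aopp v')) <= adist u u' + adist v v'.
Proof.
  rewrite (adist_sym v). unfold adist.
  replace (aadd (aadd u (aopp v)) (aopp (aadd u' (aopp v'))))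
    with (aadd (aadd u (aopp u')) (aadd v' (aopp v))).
  - apply anorm_triangle.
  - rewrite aoppD, aoppK, <- !aaddA. f_equal.
    rewrite (aaddC _ (aopp v)), <- !aaddA. reflexivity.
Qed.

Lemma adist_amul_l x b c : adist (amul x b) (amul x c) <= anorm x * adist b c.
Proof. unfold adist. rewrite <- amulNr, <- amulDr. apply anorm_subm. Qed.

Lemma adist_amul_r x b c : adist (amul b x) (amul c x) <= adist b c * anorm x.
Proof. unfold adist. rewrite <- amulNl, <- amulDl. apply anorm_subm. Qed.

Lemma anorm_acommC x y : anorm (acomm x y) = anorm (acomm y x).
Proof. unfold acomm. now rewrite <- anorm_opp, aoppD, aoppK, aaddC. Qed.

Lemma anorm_acomm_le x b c :
  anorm (acomm x b) <= anorm (acomm x c) + 2 * anorm x * adist b c.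
Proof.
  pose proof (anorm_le_adist (acomm x b) (acomm x c)).
  pose proof (adist_aadd_opp (amul x b) (amul b x) (amul x c) (amul c x)).
  pose proof (adist_amul_l x b c). pose proof (adist_amul_r x b c).
  unfold acomm in *. lra.
Qed.

End NormFacts.

Section Ultrafilter.
Variable U : (nat -> Prop) -> Prop.
Hypothesis HU : is_ultrafilter U.

Lemma U_true : U (fun _ => True).
Proof. apply HU. Qed.

Lemma U_mono (P Q : nat -> Prop) : U P -> (forall n, P n -> Q n) -> U Q.
Proof. apply HU. Qed.

Lemma U_and (P Q : nat -> Prop) : U P -> U Q -> U (fun n => P n /\ Q n).
Proof. apply HU. Qed.

Lemma U_nonempty (P : nat -> Prop) : U P -> exists n, P n.
Proof.
  intros H. apply NNPP. intro N. destruct HU as [_ [HF _]]. apply HF.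
  apply (U_mono P); auto. intros n Hn. apply N. now exists n.
Qed.

Lemma U_cofinite : nonprincipal U -> forall k, U (fun n => (k <= n)%nat).
Proof.
  intros HnP k. induction k as [|k IH].
  - apply (U_mono _ _ U_true). intros. lia.
  - destruct HU as (_ & _ & _ & _ & Hult). destruct (Hult (fun n => n = k)) as [H|H].
    + now destruct (HnP k).
    + apply (U_mono _ _ (U_and _ _ IH H)). intros n [H1 H2]. lia.
Qed.

End Ultrafilter.

Section Ultrapower.
Variables (A : CStarAlg) (U : (nat -> Prop) -> Prop).
Hypothesis HU : is_ultrafilter U.
Implicit Types (x y z : nat -> A) (p q : UPow A U).

Lemma uequiv_eventually x y eps :
  uequiv U x y -> eps > 0 -> U (fun n => adist (x n) (y n) < eps).
Proof.
  intros H Heps. apply (U_mono U HU _ _ (H eps Heps)). intros n Hn.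
  rewrite Rminus_0_r, Rabs_right in Hn; auto. apply Rle_ge, adist_ge0.
Qed.

Lemma uequiv_of_eventually x y :
  (forall eps, eps > 0 -> U (fun n => adist (x n) (y n) < eps)) -> uequiv U x y.
Proof.
  intros H eps Heps. apply (U_mono U HU _ _ (H eps Heps)). intros n Hn.
  rewrite Rminus_0_r, Rabs_right; auto. apply Rle_ge, adist_ge0.
Qed.

Lemma uequiv_refl x : uequiv U x x.
Proof.
  apply uequiv_of_eventually. intros eps Heps. apply (U_mono U HU _ _ (U_true U HU)).
  intros n _. now rewrite adist_xx.
Qed.

Lemma uequiv_sym x y : uequiv U x y -> uequiv U y x.
Proof.
  intros H eps Heps. apply (U_mono U HU _ _ (H eps Heps)). intros n. now rewrite adist_sym.
Qed.

Lemma uequiv_trans x y z : uequiv U x y -> uequiv U y z -> uequiv U x z.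
Proof.
  intros Hxy Hyz. apply uequiv_of_eventually. intros eps Heps.
  apply (U_mono U HU _ _ (U_and U HU _ _ (uequiv_eventually _ _ (eps / 2) Hxy ltac:(lra))
    (uequiv_eventually _ _ (eps / 2) Hyz ltac:(lra)))).
  intros n [H1 H2]. pose proof (adist_triangle A (x n) (y n) (z n)). lra.
Qed.

Definition upow_class x (Hx : bdd_seq x) : UPow A U :=
  exist _ (fun y => bdd_seq y /\ uequiv U x y) (ex_intro _ x (conj Hx (fun y => iff_refl _))).

Lemma urep_upow_class x Hx : urep (upow_class x Hx) x.
Proof. split; [exact Hx | apply uequiv_refl]. Qed.

Lemma urep_iff p x : urep p x -> forall y, urep p y <-> bdd_seq y /\ uequiv U x y.
Proof.
  destruct p as [P [w [Hw HP]]]. unfold urep. simpl. intros Hx y.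
  rewrite HP in Hx |- *. destruct Hx as [_ Hwx]. split.
  - intros [Hy Hwy]. split; auto. apply (uequiv_trans _ w); auto. now apply uequiv_sym.
  - intros [Hy Hxy]. split; auto. now apply (uequiv_trans _ x).
Qed.

Lemma urep_exists p : exists x, urep p x.
Proof.
  destruct p as [P [w [Hw HP]]]. exists w. unfold urep. simpl.
  apply HP. split; auto. apply uequiv_refl.
Qed.

Lemma urep_uequiv p x y : urep p x -> urep p y -> uequiv U x y.
Proof. intros Hx Hy. now apply (urep_iff p x Hx y). Qed.

Lemma upow_ext p q x : urep p x -> urep q x -> p = q.
Proof.
  intros Hp Hq. destruct p as [P HP], q as [Q HQ]. apply subset_eq_compat.
  apply functional_extensionality. intro y. apply propositional_extensionality.
  rewrite (urep_iff _ x Hp y), (urep_iff _ x Hq y). reflexivity.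
Qed.

Definition rep_of p : nat -> A :=
  proj1_sig (constructive_indefinite_description _ (urep_exists p)).

Lemma urep_rep_of p : urep p (rep_of p).
Proof. exact (proj2_sig (constructive_indefinite_description _ (urep_exists p))). Qed.

Lemma rep_of_inj : Injective rep_of.
Proof.
  intros p q E. apply (upow_ext p q (rep_of p)); [|rewrite E]; apply urep_rep_of.
Qed.

Lemma udist_refl p : udist p p 0.
Proof.
  destruct (urep_exists p) as [x Hx]. exists x, x. repeat split; auto.
  intros eps Heps. apply (U_mono U HU _ _ (U_true U HU)). intros n _.
  rewrite adist_xx, Rminus_0_r, Rabs_R0. lra.
Qed.

Lemma udist_eventually_lt p q r e x y :
  udist p q r -> r < e -> urep p x -> urep q y -> U (fun n => adist (x n) (y n) < e).
Proof.
  intros (x' & y' & Hx' & Hy' & Hlim) Hre Hx Hy.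
  set (e' := (e - r) / 3).
  assert (He' : e' > 0) by (unfold e'; lra).
  pose proof (uequiv_eventually _ _ e' (urep_uequiv p x x' Hx Hx') He') as Ux.
  pose proof (uequiv_eventually _ _ e' (urep_uequiv q y' y Hy' Hy) He') as Uy.
  apply (U_mono U HU _ _ (U_and U HU _ _ Ux (U_and U HU _ _ (Hlim e' He') Uy))).
  intros n (H1 & H2 & H3). apply Rabs_def2 in H2.
  pose proof (adist_triangle A (x n) (x' n) (y n)).
  pose proof (adist_triangle A (x' n) (y' n) (y n)).
  unfold e' in *. lra.
Qed.

End Ultrapower.

Lemma eq0_of_lt_inv_S a : 0 <= a -> (forall m, a < 2 * / INR (S m)) -> a = 0.
Proof.
  intros Ha H. destruct Ha as [Ha|]; auto. exfalso.
  destruct (archimed_cor1 (a / 2)) as [[|m] [Hm Hm0]]; [lra|lia|].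
  specialize (H m). lra.
Qed.

Section SequenceBits.
Variables (A : CStarAlg) (d : nat -> A).
Hypothesis Hd : forall (x : A) (eps : R), eps > 0 -> exists k, adist x (d k) < eps.

Definition seq_bits (x : nat -> A) (n : nat) : bool :=
  let (i, j) := Cantor.of_nat n in
  let (m, k) := Cantor.of_nat j in
  if Rlt_dec (adist (x i) (d k)) (/ INR (S m)) then true else false.

Lemma seq_bits_inj : Injective seq_bits.
Proof.
  intros x y E. apply functional_extensionality. intro i.
  apply adist_eq0, eq0_of_lt_inv_S; [apply adist_ge0|]. intro m.
  assert (Hm : / INR (S m) > 0) by (apply Rinv_0_lt_compat, lt_0_INR; lia).
  destruct (Hd (x i) (/ INR (S m)) Hm) as [k Hk].
  apply (f_equal (fun b => b (Cantor.to_nat (i, Cantor.to_nat (m, k))))) in E.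
  unfold seq_bits in E. rewrite !Cantor.cancel_of_to in E.
  destruct (Rlt_dec (adist (x i) (d k)) (/ INR (S m))) as [_|]; [|contradiction].
  destruct (Rlt_dec (adist (y i) (d k)) (/ INR (S m))) as [Hy|]; [|discriminate].
  pose proof (adist_triangle A (x i) (d k) (y i)) as Htri.
  rewrite (adist_sym A (d k)) in Htri. lra.
Qed.

End SequenceBits.

Fixpoint binary_code (s : nat -> bool) (m : nat) : nat :=
  match m with O => O | S m => (2 * binary_code s m + (if s m then 1 else 0))%nat end.

Lemma binary_code_lt s m : (binary_code s m < 2 ^ m)%nat.
Proof. induction m; simpl; [lia|]. destruct (s m); lia. Qed.

Lemma binary_code_neq s t k m : s k <> t k -> (k < m)%nat -> binary_code s m <> binary_code t m.
Proof.
  intros H. induction m as [|m IH]; intros Hk; [lia|]. simpl.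
  destruct (Nat.eq_dec k m) as [->|Hne].
  - destruct (s m), (t m); try congruence; lia.
  - assert (binary_code s m <> binary_code t m) by (apply IH; lia).
    destruct (s m), (t m); lia.
Qed.

Record central_tower {A : CStarAlg} (d : nat -> A) (delta : R) (fam : nat -> nat -> A) : Prop := {
  tower_pos : delta > 0;
  tower_norm : forall m i, (i < 2 ^ m)%nat -> anorm (fam m i) <= 1;
  tower_sep : forall m i j, (i < j)%nat -> (j < 2 ^ m)%nat -> adist (fam m i) (fam m j) >= delta;
  tower_comm : forall m i j, (i < 2 ^ m)%nat -> (j <= m)%nat ->
    anorm (acomm (fam m i) (d j)) <= / INR (S m)
}.

Lemma many_asymp_central_tower (A : CStarAlg) (d : nat -> A) :
  many_asymp_central A -> exists delta fam, central_tower d delta fam.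
Proof.
  intros (delta & Hdelta & Hmany). exists delta.
  destruct (choice (fun m (a : nat -> A) =>
    (forall i, (i < 2 ^ m)%nat -> anorm (a i) <= 1) /\
    (forall i j, (i < j)%nat -> (j < 2 ^ m)%nat -> adist (a i) (a j) >= delta) /\
    (forall i b, (i < 2 ^ m)%nat -> In b (map d (seq 0 (S m))) ->
      anorm (acomm (a i) b) <= / INR (S m))))
    as [fam Hfam].
  { intro m. apply Hmany. apply Rinv_0_lt_compat, lt_0_INR. lia. }
  exists fam. split; [exact Hdelta | apply Hfam | apply Hfam |].
  intros m i j Hi Hj. apply Hfam; auto. apply in_map, in_seq. lia.
Qed.

Section Branches.
Variables (A : CStarAlg) (U : (nat -> Prop) -> Prop).
Hypotheses (HU : is_ultrafilter U) (HnP : nonprincipal U).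
Variable d : nat -> A.
Hypothesis Hd : forall (x : A) (eps : R), eps > 0 -> exists k, adist x (d k) < eps.
Variables (delta : R) (fam : nat -> nat -> A).
Hypothesis Hfam : central_tower d delta fam.

Definition branch (s : nat -> bool) (m : nat) : A := fam m (binary_code s m).

Lemma branch_norm s n : anorm (branch s n) <= 1.
Proof. apply (tower_norm _ _ _ Hfam), binary_code_lt. Qed.

Lemma branch_bdd s : bdd_seq (branch s).
Proof. exists 1. apply branch_norm. Qed.

Lemma branch_sep s t : s <> t -> U (fun n => adist (branch s n) (branch t n) >= delta).
Proof.
  intros Hst.
  destruct (not_all_ex_not _ _ (fun H => Hst (functional_extensionality s t H))) as [k Hk].
  apply (U_mono U HU _ _ (U_cofinite U HU HnP (S k))). intros m Hm.
  pose proof (binary_code_neq s t k m Hk Hm).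
  pose proof (binary_code_lt s m). pose proof (binary_code_lt t m). unfold branch.
  destruct (Nat.lt_gt_cases (binary_code s m) (binary_code t m)) as [[Hlt|Hlt] _]; auto.
  - now apply (tower_sep _ _ _ Hfam).
  - rewrite adist_sym. now apply (tower_sep _ _ _ Hfam).
Qed.

Definition branch_class (s : nat -> bool) : UPow A U := upow_class A U (branch s) (branch_bdd s).

Lemma branch_class_inj : Injective branch_class.
Proof.
  intros s t E. apply NNPP. intro Hst.
  assert (Ht : urep (branch_class s) (branch t)) by (rewrite E; apply urep_upow_class, HU).
  destruct Ht as [_ Hequiv].
  destruct (U_nonempty U HU _ (U_and U HU _ _ (branch_sep s t Hst)
    (uequiv_eventually A U HU _ _ delta Hequiv (tower_pos _ _ _ Hfam)))) as [n [H1 H2]].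
  lra.
Qed.

Lemma branch_asymp_central s b eps : eps > 0 -> U (fun n => anorm (acomm (branch s n) b) < eps).
Proof.
  intros Heps. destruct (Hd b (eps / 4)) as [j Hj]; [lra|].
  destruct (archimed_cor1 (eps / 2)) as [N [HN HN0]]; [lra|].
  apply (U_mono U HU _ _ (U_cofinite U HU HnP (max j N))). intros n Hn.
  pose proof (anorm_acomm_le A (branch s n) b (d j)).
  assert (anorm (acomm (branch s n) (d j)) <= / INR (S n))
    by (apply (tower_comm _ _ _ Hfam); [apply binary_code_lt | lia]).
  assert (/ INR (S n) <= / INR N)
    by (apply Rinv_le_contravar; [apply lt_0_INR; lia | apply le_INR; lia]).
  pose proof (branch_norm s n).
  pose proof (anorm_ge0 A (branch s n)). pose proof (adist_ge0 A b (d j)).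
  assert (anorm (branch s n) * adist b (d j) <= 1 * (eps / 4)) by (apply Rmult_le_compat; lra).
  lra.
Qed.

Lemma branch_class_relcomm s : relcomm (branch_class s).
Proof.
  intros b y [_ Hy] eps Heps. pose proof (anorm_ge0 A b).
  set (c := eps / (4 * (anorm b + 1))).
  assert (Hc : c > 0) by (apply Rdiv_lt_0_compat; lra).
  assert (Hbc : 2 * anorm b * c <= eps / 2).
  { assert (4 * (anorm b + 1) * c = eps) by (unfold c; field; lra). nra. }
  apply (U_mono U HU _ _ (U_and U HU _ _ (branch_asymp_central s b (eps / 2) ltac:(lra))
    (uequiv_eventually A U HU _ _ c Hy Hc))).
  intros n [Hcomm Hdist]. rewrite Rminus_0_r, Rabs_right by apply Rle_ge, anorm_ge0.
  rewrite anorm_acommC in *. rewrite adist_sym in Hdist.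
  pose proof (anorm_acomm_le A b (y n) (branch s n)).
  assert (2 * anorm b * adist (y n) (branch s n) <= 2 * anorm b * c)
    by (apply Rmult_le_compat_l; [lra | apply Rlt_le, Hdist]).
  lra.
Qed.

Lemma dense_card_ge_c (S D : UPow A U -> Prop) :
  (forall s, S (branch_class s)) -> dense_in (@udist A U) S D -> card_ge_c D.
Proof.
  intros HS [_ HD]. pose proof (tower_pos _ _ _ Hfam) as Hdelta.
  destruct (choice (fun s (y : {y | D y}) =>
    exists r, udist (branch_class s) (proj1_sig y) r /\ r < delta / 2)) as [f Hf].
  { intro s. destruct (HD _ (HS s) (delta / 2)) as (y & r & Dy & Hr & Hlt); [lra|].
    now exists (exist _ y Dy), r. }
  apply (card_ge_c_of_cantor D f). intros s t E. apply NNPP. intro Hst.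
  destruct (Hf s) as (r & Hs & Hrs), (Hf t) as (r' & Ht & Hrt). rewrite E in Hs.
  destruct (urep_exists A U HU (proj1_sig (f t))) as [z Hz].
  pose proof (udist_eventually_lt A U HU _ _ _ _ _ z Hs Hrs (urep_upow_class A U HU _ _) Hz) as Us.
  pose proof (udist_eventually_lt A U HU _ _ _ _ _ z Ht Hrt (urep_upow_class A U HU _ _) Hz) as Ut.
  destruct (U_nonempty U HU _ (U_and U HU _ _ (branch_sep s t Hst) (U_and U HU _ _ Us Ut)))
    as (n & Hsep & Hsn & Htn).
  pose proof (adist_triangle A (branch s n) (z n) (branch t n)) as Htri.
  rewrite (adist_sym A (z n)) in Htri. lra.
Qed.

Lemma density_char_and_card_of_branches (S : UPow A U -> Prop) :
  (forall s, S (branch_class s)) -> density_char_c (@udist A U) S /\ card_eq_c S.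
Proof.
  intros HS.
  assert (Hcard : card_eq_c S).
  { apply (card_eq_c_of_cantor S (fun s => exist S (branch_class s) (HS s))
      (fun p => seq_bits A d (rep_of A U HU (proj1_sig p)))).
    - intros s t E. apply branch_class_inj. exact (f_equal (@proj1_sig _ _) E).
    - intros [p Hp] [q Hq] E. apply seq_bits_inj, rep_of_inj in E; auto.
      now apply subset_eq_compat. }
  split; [split|]; auto.
  - exists S. repeat split; auto. intros p Hp eps Heps. exists p, 0. split; [|split]; auto.
    apply udist_refl, HU.
  - intros D HD. now apply (dense_card_ge_c S).
Qed.

End Branches.

Theorem mainTheorem14 :
  forall (A : CStarAlg) (U : (nat -> Prop) -> Prop),
    separable A -> many_asymp_central A ->
    is_ultrafilter U -> nonprincipal U ->
    (density_char_c (@udist A U) (@relcomm A U) /\ card_eq_c (@relcomm A U)) /\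
    (density_char_c (@udist A U) (fun _ => True) /\ card_eq_c (fun _ : UPow A U => True)).
Proof.
  intros A U [d Hd] Hmany HU HnP.
  destruct (many_asymp_central_tower A d Hmany) as (delta & fam & Hfam).
  split; apply (density_char_and_card_of_branches A U HU HnP d Hd delta fam Hfam).
  - intro s. now apply branch_class_relcomm.
  - now intros.
Qed.
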